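(* Let $G$ be a finite group acting on a complex abelian variety $A$, and let $H\le G$. Let $H_1,\dots,H_s$ be the double cosets of $H$ in $G$, and $q_i:=\frac1{|H|}\sum_{y\in H_i}y$. Let $V$ be an irreducible complex representation of $G$ with $\dim V^H=1$ and $\chi_V$ rational-valued, with associated irreducible rational representation $W$. Then $\chi_V(q_i)\in\mathbb{Z}$ for all $i$, and $$q_i(z)=\chi_V(q_i)\,z\quad\text{for all } z\in A_{H,\widetilde W}\text{ and all } i=1,\dots,s.$$
   Context: The action of $G$ on $A$ induces an algebra homomorphism $\mathbb{Q}[G]\to\mathrm{End}_{\mathbb Q}(A)$. Elements of $\mathbb{Q}[G]$ are identified with their images. Set $p_H:=\frac1{|H|}\sum_{h\in H}h$ and $A_H:=\mathrm{Im}(np_H)$ for a suitable positive integer $n$; the $q_i$ act as endomorphisms of $A_H$. $\chi_V$ is extended linearly to $\mathbb{Q}[G]$. Define $e_W:=\frac{\dim V}{|G|}\sum_{g}\chi_V(g^{-1})g$, $f_{H,\widetilde W}:=p_He_W$, and $A_{H,\widetilde W}:=\mathrm{Im}(f_{H,\widetilde W})$, with $\mathrm{Im}(\alpha)=\mathrm{Im}(n\alpha)$ for any positive integer $n$ making $n\alpha$ an endomorphism. *)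

From HB Require Import structures.
From mathcomp Require Import all_boot all_order all_algebra all_fingroup all_solvable all_field all_character.
Set Implicit Arguments. Unset Strict Implicit. Unset Printing Implicit Defensive.
Import GRing.Theory Num.Theory.
Local Open Scope ring_scope.

(* Elements of the group algebra C[G] (here with algC coefficients, which
   contains Q[G]) are represented by their coefficient functions gT -> algC;
   only the values on G matter. *)

Definition ga_mul (gT : finGroupType) (G : {set gT}) (a b : gT -> algC) : gT -> algC :=
  fun g => \sum_(x in G) a x * b (x^-1 * g)%g.

Definition pH (gT : finGroupType) (H : {set gT}) : gT -> algC :=
  fun g => if g \in H then (#|H|%:R)^-1 else 0.

Definition eW (gT : finGroupType) (G : {group gT}) (chi : 'CF(G)) : gT -> algC :=
  fun g => if g \in G then chi 1%g / #|G|%:R * chi (g^-1)%g else 0.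

Definition fHW (gT : finGroupType) (G H : {group gT}) (chi : 'CF(G)) : gT -> algC :=
  ga_mul G (pH H) (eW chi).

Definition dcoset (gT : finGroupType) (H : {set gT}) (x : gT) : {set gT} :=
  (H :* x * H)%g.

Definition qelt (gT : finGroupType) (H D : {set gT}) : gT -> algC :=
  fun g => if g \in D then (#|H|%:R)^-1 else 0.

Definition cf_lin (gT : finGroupType) (G : {group gT}) (chi : 'CF(G)) (a : gT -> algC) : algC :=
  \sum_(g in G) a g * chi g.

(* action of q_D = 1/|H| sum_{y in D} y on an H-invariant element z (e.g. z in
   A_H): since D is a union of left cosets yH and z is H-fixed, this equals
   sum over the left cosets C of H in D of (repr C) z. *)
Definition qD_act (gT : finGroupType) (A : zmodType) (rho : gT -> A -> A)
  (H D : {set gT}) (z : A) : A :=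
  \sum_(C in lcosets H D) rho (repr C) z.

From HB Require Import structures.
From mathcomp Require Import all_boot all_order all_algebra all_fingroup all_solvable all_field all_character.
Set Implicit Arguments. Unset Strict Implicit. Unset Printing Implicit Defensive.
Import GRing.Theory Num.Theory.
Local Open Scope ring_scope.

(* Proof of Lemma 4.4.  Let chi = 'chi_i, afforded by a representation rG,
   let D = HxH, and write S_X = sum_(y in X) rG y.
   1. P = S_H / |H| is idempotent with trace '[Res chi, 1]_H = 1; in
      characteristic 0 it therefore has rank 1, so P M P is a multiple of P
      for every matrix M.
   2. D is stable under multiplication by H on both sides, so
      S_D = P S_D P; taking traces, S_D = lam S_H with lam = chi(q_D).
   3. Multiplying by rG(j^-1) and taking traces turns this into the
      eigen-identity sum_C phi(r_C^-1 j) = lam phi(j), where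
      phi(a) = sum_(h in H) chi(a^-1 h) and r_C runs over representatives of
      the left H-cosets C contained in D.
   4. phi is a nonzero eigenvector of an integer (counting) matrix, so lam is
      an algebraic integer; lam is rational, hence lam = c is an integer.
   5. f_{H,W} is proportional to phi on G, so any integer coefficient function
      b = n f_{H,W} obeys the same identity; expanding q_D z for
      z = sum_g b(g) g w then gives q_D z = c z. *)

(* We factor
   P = U V through its rank: idempotency forces V U = 1, so the rank is the
   trace, i.e. 1, and P M P = U (V M U) V with V M U a 1 x 1 matrix. *)
Lemma idempotent_tr1_sandwich (R : numFieldType) d (P M : 'M[R]_d) :
  P *m P = P -> \tr P = 1 -> exists s, P *m M *m P = s *: P.
Proof.
rewrite -(mulmx_base P).
move: (col_base P) (row_base P) (col_base_full P) (row_base_free P).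
move: (\rank P) => r U V fullU freeV idemP trP.
have VU : V *m U = 1%:M.
  apply: (row_free_inj freeV); rewrite /= mul1mx.
  apply: (row_full_inj fullU).
  by rewrite !mulmxA -[U *m V *m U *m V]mulmxA idemP.
have r1 : r = 1%N.
  by apply/eqP; rewrite -(pnatr_eq1 R) -mxtrace1 -VU mxtrace_mulC trP.
subst r; exists ((V *m M *m U) 0 0).
have -> : U *m V *m M *m (U *m V) = U *m (V *m M *m U) *m V by rewrite !mulmxA.
by rewrite {1}[V *m M *m U]mx11_scalar mul_mx_scalar scalemxAl.
Qed.

Section CosetSums.
Variable gT : finGroupType.

Lemma sum_transl (R : nmodType) (S : {set gT}) g (F : gT -> R) :
  (forall y, ((g * y)%g \in S) = (y \in S)) ->
  \sum_(y in S) F (g * y)%g = \sum_(y in S) F y.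
Proof.
move=> stabS; rewrite (reindex_inj (mulgI (g^-1)%g)) /=.
apply: eq_big => y; last by rewrite mulKVg.
by rewrite -[in RHS](mulKVg g y) stabS.
Qed.

Lemma sum_transr (R : nmodType) (S : {set gT}) g (F : gT -> R) :
  (forall y, ((y * g)%g \in S) = (y \in S)) ->
  \sum_(y in S) F (y * g)%g = \sum_(y in S) F y.
Proof.
move=> stabS; rewrite (reindex_inj (mulIg (g^-1)%g)) /=.
apply: eq_big => y; last by rewrite mulgKV.
by rewrite -[in RHS](mulgKV g y) stabS.
Qed.

Variable H : {group gT}.

Definition biinvariant (D : {set gT}) :=
  forall h y, h \in H ->
    ((h * y)%g \in D) = (y \in D) /\ ((y * h)%g \in D) = (y \in D).

Lemma group_biinvariant : biinvariant H.
Proof. by move=> h y hH; rewrite groupMl ?groupMr. Qed.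

Lemma dcosetP x y :
  reflect (exists h1 h2, [/\ h1 \in H, h2 \in H & y = (h1 * x * h2)%g])
          (y \in dcoset H x).
Proof.
apply: (iffP mulsgP) => [[a b aHx bH ->]|[h1 [h2 [h1H h2H ->]]]].
  exists (a * x^-1)%g, b; split => //; first by rewrite -mem_rcoset.
  by rewrite mulgKV.
by exists (h1 * x)%g h2 => //; rewrite mem_rcoset mulgK.
Qed.

Lemma dcoset_biinvariant x : biinvariant (dcoset H x).
Proof.
move=> h y hH; split; apply/dcosetP/dcosetP.
- case=> h1 [h2 [h1H h2H Ey]]; exists (h^-1 * h1)%g, h2.
  split; rewrite ?groupM ?groupV //.
  by apply: (mulgI h); rewrite Ey !mulgA mulgV mul1g.
- by case=> h1 [h2 [h1H h2H ->]]; exists (h * h1)%g, h2; rewrite groupM ?mulgA.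
- case=> h1 [h2 [h1H h2H Ey]]; exists h1, (h2 * h^-1)%g.
  by split; rewrite ?groupM ?groupV // mulgA -Ey mulgK.
- by case=> h1 [h2 [h1H h2H ->]]; exists h1, (h2 * h)%g; rewrite groupM ?mulgA.
Qed.

Lemma dcoset_sub (G : {group gT}) x :
  H \subset G -> x \in G -> dcoset H x \subset G.
Proof.
move=> sHG xG; apply/subsetP => _ /dcosetP[h1 [h2 [h1H h2H ->]]].
by rewrite !groupM // (subsetP sHG).
Qed.

Lemma repr_lcosets (D : {set gT}) C :
  biinvariant D -> C \in lcosets H D -> repr C \in D.
Proof.
move=> biD; case/lcosetsP => y yD ->.
have /lcosetP[h hH ->] := mem_repr _ (lcoset_refl H y).
by rewrite (biD _ _ hH).2.
Qed.

(* D is the disjoint union of the cosets r_C H, C in lcosets H D. *)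
Lemma sum_lcosets (R : nmodType) (D : {set gT}) (F : gT -> R) : biinvariant D ->
  \sum_(C in lcosets H D) \sum_(h in H) F (repr C * h)%g = \sum_(y in D) F y.
Proof.
move=> biD.
rewrite (partition_big (fun y => y *: H)%g (mem (lcosets H D))) /=; last first.
  by move=> y yD; apply/lcosetsP; exists y.
apply: eq_bigr => C /lcosetsP[x xD ->].
have -> : \sum_(y in D | (y *: H == x *: H)%g) F y = \sum_(y in (x *: H)%g) F y.
  apply: eq_bigl => y; apply/andP/idP => [[_ /eqP <-]|yxH].
    exact: lcoset_refl.
  split; last by apply/eqP/lcoset_eqP.
  by have /lcosetP[h hH ->] := yxH; rewrite (biD _ _ hH).2.
move: (mem_repr _ (lcoset_refl H x)); set r := repr _ => /lcoset_eqP <-.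
by rewrite -lcosetE big_imset //= => a b _ _ /mulgI.
Qed.

End CosetSums.

Section Characters.
Variables (gT : finGroupType) (G H : {group gT}).
Hypothesis sHG : H \subset G.
Variable chi : 'CF(G).

Definition hphi (a : gT) : algC := \sum_(h in H) chi (a^-1 * h)%g.

Lemma sum_cfRes1 : \sum_(h in H) chi h = #|H|%:R * '['Res[H] chi, 1]_H.
Proof.
rewrite cfdotE mulrA divff ?natrG_neq0 // mul1r.
by apply: eq_bigr => h hH; rewrite cfResE // cfun1E hH conjC1 mulr1.
Qed.

Lemma hphi1 : hphi 1%g = #|H|%:R * '['Res[H] chi, 1]_H.
Proof. by rewrite -sum_cfRes1; apply: eq_bigr => h _; rewrite invg1 mul1g. Qed.

Lemma fHW_hphi a : a \in G ->
  fHW H chi a = (#|H|%:R^-1 * (chi 1%g / #|G|%:R)) * hphi a.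
Proof.
move=> aG; rewrite /fHW /ga_mul (big_setID H) /= (setIidPr sHG).
rewrite [X in _ + X]big1 ?addr0; last first.
  by move=> y; rewrite inE => /andP[/negPf yH _]; rewrite /pH yH mul0r.
rewrite mulr_sumr; apply: eq_bigr => h hH.
rewrite /pH /eW hH groupM ?groupV ?(subsetP sHG h hH) // mulrA.
by rewrite invMg invgK.
Qed.

Lemma cf_lin_qelt (D : {set gT}) : D \subset G ->
  cf_lin chi (qelt H D) = #|H|%:R^-1 * \sum_(y in D) chi y.
Proof.
move=> sDG; rewrite /cf_lin (big_setID D) /= (setIidPr sDG).
rewrite [X in _ + X]big1 ?addr0; last first.
  by move=> y; rewrite inE => /andP[/negPf yD _]; rewrite /qelt yD mul0r.
by rewrite mulr_sumr; apply: eq_bigr => y yD; rewrite /qelt yD.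
Qed.

Lemma fHW_eigen (D : {set gT}) lam : biinvariant H D -> D \subset G ->
  (forall j, \sum_(C in lcosets H D) hphi ((repr C)^-1 * j)%g = lam * hphi j) ->
  forall j, j \in G ->
  \sum_(C in lcosets H D) fHW H chi ((repr C)^-1 * j)%g = lam * fHW H chi j.
Proof.
move=> biD sDG eigen j jG.
have transG C : C \in lcosets H D -> ((repr C)^-1 * j)%g \in G.
  by move/(repr_lcosets biD)/(subsetP sDG) => rG; rewrite groupM ?groupV.
under eq_bigr => C CD do rewrite fHW_hphi ?transG //.
by rewrite -mulr_sumr eigen fHW_hphi // mulrCA.
Qed.

End Characters.

Section Representation.
Variables (gT : finGroupType) (G H : {group gT}) (n : nat).
Variable rG : mx_representation algC G n.
Hypothesis sHG : H \subset G.

Let HG h : h \in H -> h \in G. Proof. exact: (subsetP sHG). Qed.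

Definition rsum (S : {set gT}) : 'M[algC]_n := \sum_(y in S) rG y.

Lemma cfRepr_tr x : x \in G -> cfRepr rG x = \tr (rG x).
Proof. by rewrite cfunE => ->. Qed.

Lemma tr_rsum (S : {set gT}) :
  S \subset G -> \tr (rsum S) = \sum_(y in S) cfRepr rG y.
Proof.
move=> sSG; rewrite raddf_sum; apply: eq_bigr => y yS.
by rewrite cfRepr_tr ?(subsetP sSG).
Qed.

Lemma rsumHl (D : {set gT}) : biinvariant H D -> D \subset G ->
  rsum H *m rsum D = #|H|%:R *: rsum D.
Proof.
move=> biD sDG; rewrite /rsum mulmx_suml scaler_nat -sumr_const.
apply: eq_bigr => h hH; rewrite mulmx_sumr.
rewrite -[RHS](sum_transl _ (fun y => (biD h y hH).1)).
by apply: eq_bigr => y yD; rewrite repr_mxM ?(HG hH) ?(subsetP sDG y yD).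
Qed.

Lemma rsumHr (D : {set gT}) : biinvariant H D -> D \subset G ->
  rsum D *m rsum H = #|H|%:R *: rsum D.
Proof.
move=> biD sDG; rewrite /rsum mulmx_suml scaler_nat -sumr_const.
under eq_bigr => y yD do rewrite mulmx_sumr.
rewrite exchange_big /=; apply: eq_bigr => h hH.
rewrite -[RHS](sum_transr _ (fun y => (biD h y hH).2)).
by apply: eq_bigr => y yD; rewrite repr_mxM ?(HG hH) ?(subsetP sDG y yD).
Qed.

Hypothesis dimVH : '['Res[H] (cfRepr rG), 1]_H = 1.

Lemma rsum_biinvariant (D : {set gT}) : biinvariant H D -> D \subset G ->
  rsum D = (#|H|%:R^-1 * \tr (rsum D)) *: rsum H.
Proof.
move=> biD sDG.
have nH : #|H|%:R != 0 :> algC := natrG_neq0 _ _.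
have trSH : \tr (rsum H) = #|H|%:R.
  by rewrite tr_rsum // (sum_cfRes1 sHG) dimVH mulr1.
pose P := #|H|%:R^-1 *: rsum H.
have idemP : P *m P = P.
  rewrite /P -scalemxAl -scalemxAr (rsumHl (@group_biinvariant _ H) sHG).
  by rewrite !(scalerA (_ : algC)) divfK.
have trP : \tr P = 1 by rewrite /P mxtraceZ trSH mulVf.
have [s Ps] := idempotent_tr1_sandwich (rsum D) idemP trP.
have PSDP : P *m rsum D *m P = rsum D.
  rewrite /P -scalemxAl -scalemxAr -scalemxAl rsumHl // -scalemxAl rsumHr //.
  by rewrite !(scalerA (_ : algC)) divfK // mulVf // scale1r.
have eSD : rsum D = (s / #|H|%:R) *: rsum H.
  by rewrite -PSDP Ps (scalerA (_ : algC)) mulrC.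
by rewrite [X in \tr X]eSD mxtraceZ trSH divfK // mulrC.
Qed.

(* Step 3: the eigen-identity for phi, obtained from Step 2 by taking the
   trace after multiplying by rG(j^-1). *)
Lemma hphi_eigen (D : {set gT}) : biinvariant H D -> D \subset G -> forall j,
  \sum_(C in lcosets H D) hphi H (cfRepr rG) ((repr C)^-1 * j)%g =
  (#|H|%:R^-1 * \sum_(y in D) cfRepr rG y) * hphi H (cfRepr rG) j.
Proof.
move=> biD sDG j; rewrite /hphi.
under eq_bigr => C _ do under eq_bigr => h _ do rewrite invMg invgK -mulgA.
rewrite (sum_lcosets (fun y => cfRepr rG (j^-1 * y)%g) biD).
have [jG|njG] := boolP (j \in G); last first.
  have out y : y \in G -> cfRepr rG (j^-1 * y)%g = 0.
    by move=> yG; rewrite cfun0 // groupMr // groupV.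
  rewrite big1 ?[X in _ * X]big1 ?mulr0 // => y yS.
  - exact/out/HG.
  - exact/out/(subsetP sDG).
have trM (S : {set gT}) : S \subset G ->
    \tr (rG (j^-1)%g *m rsum S) = \sum_(y in S) cfRepr rG (j^-1 * y)%g.
  move=> sSG; rewrite mulmx_sumr raddf_sum; apply: eq_bigr => y yS.
  have jG' : j^-1%g \in G by rewrite groupV.
  have yG := subsetP sSG y yS.
  by rewrite cfRepr_tr ?groupM // (repr_mxM rG).
rewrite -trM // -tr_rsum // {1}rsum_biinvariant // -scalemxAr mxtraceZ.
by rewrite trM.
Qed.

End Representation.

(* Step 4: an eigenvalue of right translation by a finite family of group
   elements, with a nonzero eigenvector phi, is an algebraic integer: it is
   an eigenvalue of the integer matrix counting the translations r_k x = y. *)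
Lemma translation_eigenvalue_Aint (gT : finGroupType) (I : finType) (K : {pred I})
    (r : I -> gT) (phi : gT -> algC) lam j0 :
  (forall j, \sum_(k in K) phi ((r k)^-1 * j)%g = lam * phi j) ->
  phi j0 != 0 -> lam \in Aint.
Proof.
move=> eigen nz.
pose ev : 'I_#|gT| -> gT := enum_val.
pose T : 'M[int]_#|gT| :=
  \matrix_(a, b) (\sum_(k in K) ((r k * ev a)%g == ev b) : nat)%:Z.
apply: (@root_monic_Aint (char_poly (map_mx intr T))); last 2 first.
- exact: char_poly_monic.
- rewrite -map_char_poly; apply/polyOverP => m; rewrite coef_map /=.
  exact: rpred_int.
rewrite -eigenvalue_root_char; apply/eigenvalueP.
exists (\row_b phi (ev b)); last first.
  apply/eqP => /rowP/(_ (enum_rank j0)); rewrite !mxE /ev enum_rankK.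
  exact/eqP.
apply/rowP => b; rewrite !mxE -eigen.
under eq_bigr => a _ do rewrite !mxE -pmulrn natr_sum mulr_sumr.
rewrite exchange_big /=; apply: eq_bigr => k _.
pose a0 := enum_rank ((r k)^-1 * ev b)%g.
rewrite (bigD1 a0) //= big1 ?addr0.
  by rewrite /ev /a0 enum_rankK mulKVg eqxx mulr1.
move=> a na0; case: eqP => [Eb|_]; last by rewrite mulr0.
by case/eqP: na0; rewrite /a0 -Eb mulKg /ev enum_valK.
Qed.

Section AdditiveAction.
Variables (gT : finGroupType) (G : {group gT}) (A : zmodType).
Variable rho : gT -> A -> A.
Hypothesis rho_add : forall g, g \in G -> forall x y, rho g (x + y) = rho g x + rho g y.
Hypothesis rhoM : forall g h a, g \in G -> h \in G -> rho (g * h)%g a = rho g (rho h a).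

Lemma rho0 g : g \in G -> rho g 0 = 0.
Proof. by move=> gG; apply: (addrI (rho g 0)); rewrite -rho_add // !addr0. Qed.

Lemma rho_mulrz g a k : g \in G -> rho g (a *~ k) = rho g a *~ k.
Proof.
move=> gG; have rho_mulrn m : rho g (a *+ m) = rho g a *+ m.
  by elim: m => [|m IH]; rewrite ?mulr0n ?rho0 // !mulrS rho_add // IH.
case: k => m; first by rewrite -!pmulrn rho_mulrn.
rewrite NegzE !mulrNz -!pmulrn -rho_mulrn.
by apply: (addrI (rho g (a *+ m.+1))); rewrite -rho_add // !subrr rho0.
Qed.

Lemma qD_act_span (H : {group gT}) (D : {set gT}) w (b : gT -> int) :
  biinvariant H D -> D \subset G ->
  qD_act rho H D (\sum_(g in G) rho g w *~ b g) =
  \sum_(g in G) rho g w *~ \sum_(C in lcosets H D) b ((repr C)^-1 * g)%g.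
Proof.
move=> biD sDG; rewrite /qD_act.
have rCG C : C \in lcosets H D -> repr C \in G.
  by move/(repr_lcosets biD)/(subsetP sDG).
under eq_bigr => C /rCG rG.
  rewrite (big_morph (rho (repr C)) (rho_add rG) (rho0 rG)).
  have rVG : (repr C)^-1%g \in G by rewrite groupV.
  rewrite -(sum_transl _ (fun y => groupMl y rVG)).
  under eq_bigr => g gG do rewrite rho_mulrz ?groupM // -rhoM ?groupM // mulKVg.
over.
by rewrite exchange_big; apply: eq_bigr => g _; rewrite mulrz_sumr.
Qed.

End AdditiveAction.

Theorem lemma4p4 (gT : finGroupType) (G H : {group gT}) (A : zmodType)
  (rho : gT -> A -> A)
  (rho_add : forall g, g \in G -> forall x y, rho g (x + y) = rho g x + rho g y)
  (rho1 : forall a, rho 1%g a = a)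
  (rhoM : forall g h a, g \in G -> h \in G -> rho (g * h)%g a = rho g (rho h a))
  (sHG : H \subset G)
  (i : Iirr G)
  (dimVH : '['Res[H] 'chi_i, 1]_H = 1)
  (rat_chi : forall g, 'chi_i g \in Crat) :
  forall x, x \in G ->
    exists c : int,
      cf_lin 'chi_i (qelt H (dcoset H x)) = c%:~R /\
      forall (n : nat) (b : gT -> int),
        (0 < n)%N ->
        (forall g, g \in G -> (b g)%:~R = n%:R * fHW H 'chi_i g) ->
        forall (w z : A), z = \sum_(g in G) rho g w *~ b g ->
          qD_act rho H (dcoset H x) z = z *~ c.
Proof.
move=> x xG; set D := dcoset H x.
have biD : biinvariant H D := @dcoset_biinvariant _ H x.
have sDG : D \subset G := dcoset_sub sHG xG.
pose lam := #|H|%:R^-1 * \sum_(y in D) 'chi_i y.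
have eigen j : \sum_(C in lcosets H D) hphi H 'chi_i ((repr C)^-1 * j)%g =
               lam * hphi H 'chi_i j.
  by have := hphi_eigen sHG (rG := 'Chi_i); rewrite irrRepr; apply.
have lamA : lam \in Aint.
  apply: translation_eigenvalue_Aint eigen (_ : hphi H 'chi_i 1%g != 0).
  by rewrite (hphi1 sHG) dimVH mulr1 natrG_neq0.
have lamQ : lam \in Crat by rewrite rpredM ?rpredV ?rpred_nat ?rpred_sum.
have /intrP[c Ec] := Cint_rat_Aint lamQ lamA.
exists c; split; first by rewrite cf_lin_qelt // -Ec.
(* Step 5: the coefficients of z are an eigenvector of translation by q_D. *)
move=> n b _ hb w z ->; rewrite qD_act_span // mulrz_suml.
apply: eq_bigr => g gG; rewrite -mulrzA; congr (_ *~ _).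
apply: (@intr_inj algC); rewrite rmorph_sum rmorphM /= hb // -Ec.
under eq_bigr => C /(repr_lcosets biD)/(subsetP sDG) rG.
  rewrite hb ?groupM ?groupV //.
over.
by rewrite -mulr_sumr (fHW_eigen sHG biD sDG eigen gG) mulrCA mulrC.
Qed.
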